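(* Let $\underline a=\{a_i\}_{i\in I}$ be a pseudo-Cauchy sequence in $K$ such that $I^*$ has no maximum, and such that either $\underline a$ is of transcendental type, or $\underline a$ is of algebraic type with $\gamma_{\underline a}\neq\infty$. Let $g\in K[x]$ be such that every polynomial of degree smaller than $\deg g$ is fixed by $\underline a$. Then $v(g(a_i))=\nu_i(g)$ for all sufficiently large $i\in I^*$.
   Context: $(K,v)$ is a valued field with value group $\Gamma$. A pseudo-Cauchy sequence is $\underline a=\{a_i\}_{i\in I}\subseteq K$ with $I$ a well-ordered set of at least two elements such that $v(a_i-a_j)<v(a_j-a_k)$ whenever $i<j<k$. $I^*=I\setminus\{\max I\}$ if $I$ has a maximum, else $I^*=I$. For $i\in I^*$, $\gamma_i:=v(a_{i+1}-a_i)$ ($i+1$ the successor of $i$) and $\nu_i:=v_{a_i,\gamma_i}$, where $v_{a,\gamma}(\sum_k b_k(x-a)^k)=\min_k\{v(b_k)+k\gamma\}$. A polynomial $f$ is fixed by $\underline a$ if $\{v(f(a_i))\}_{i\in I}$ is ultimately constant. When $I^*$ has no maximum, $\underline a$ is of transcendental type if every $f\in K[x]$ is fixed by $\underline a$, and of algebraic type otherwise. For $\underline a$ of algebraic type, let $F$ be a monic polynomial of smallest degree not fixed by $\underline a$, $D=\{\alpha\in\Gamma_{\mathbb Q}\mid\alpha\le\nu_i(F)\text{ for some }i\in I^*\}$ ($\Gamma_{\mathbb Q}$ the divisible hull of $\Gamma$), and $\gamma_{\underline a}=\infty$ if $D=\Gamma_{\mathbb Q}$, and otherwise $\gamma_{\underline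 a}$ is the element of the universal ordered group realizing the quasi-cut $(D,\Gamma_{\mathbb Q}\setminus D)$ (in particular $\gamma_{\underline a}\neq\infty$ iff $D\neq\Gamma_{\mathbb Q}$). *)

From HB Require Import structures.
From mathcomp Require Import all_boot all_order all_algebra.
Set Implicit Arguments. Unset Strict Implicit. Unset Printing Implicit Defensive.
Import Order.TTheory GRing.Theory.
Local Open Scope ring_scope.

Record oag (G : zmodType) := OAG {
  ole : G -> G -> bool;
  ole_refl : forall x, ole x x;
  ole_trans : forall x y z, ole x y -> ole y z -> ole x z;
  ole_anti : forall x y, ole x y -> ole y x -> x = y;
  ole_total : forall x y, ole x y || ole y x;
  ole_add : forall x y z, ole x y -> ole (x + z) (y + z) }.

(* G extended with infinity, represented by option G (None = infinity). *)
Section Ext.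
Variables (G : zmodType) (O : oag G).
Definition leE (x y : option G) : bool :=
  match x, y with
  | _, None => true
  | None, Some _ => false
  | Some a, Some b => ole O a b
  end.
Definition ltE (x y : option G) : bool := leE x y && ~~ leE y x.
Definition addE (x y : option G) : option G :=
  match x, y with Some a, Some b => Some (a + b) | _, _ => None end.
Definition minE (x y : option G) : option G := if leE x y then x else y.
End Ext.

Record valuation (K : fieldType) (G : zmodType) (O : oag G) := Valuation {
  vval : K -> option G;
  val_inf : forall x, vval x = None <-> x = 0;
  valM : forall x y, vval (x * y) = addE (vval x) (vval y);
  valD : forall x y, leE O (minE O (vval x) (vval y)) (vval (x + y));
  val_surj : forall g : G, exists x, vval x = Some g }.
Arguments valuation : clear implicits.

Section PCS.
Variables (K : fieldType) (G : zmodType) (O : oag G) (v : valuation K G O).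
Variables (d : Order.disp_t) (I : orderType d) (a : I -> K).

(* v_{c,gamma}(f) = min_k (v(b_k) + k gamma) where f = sum_k b_k (x - c)^k *)
Definition nu (c : K) (gam : G) (f : {poly K}) : option G :=
  let f' := f \Po ('X + c%:P) in
  foldr (minE O) None
    [seq addE (vval v f'`_k) (Some (gam *+ k)) | k <- iota 0 (size f)].

Definition well_ordered : Prop :=
  forall P : I -> Prop, (exists i, P i) ->
    exists i, P i /\ forall j, P j -> (i <= j)%O.

Definition in_Istar (i : I) : Prop := exists j, (i < j)%O.

Definition is_succ (i j : I) : Prop :=
  (i < j)%O /\ forall k, (i < k)%O -> (j <= k)%O.

Definition pseudo_cauchy : Prop :=
  well_ordered /\ (exists i j : I, i != j) /\
  forall i j k, (i < j)%O -> (j < k)%O ->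
    ltE O (vval v (a i - a j)) (vval v (a j - a k)).

Definition Istar_nomax : Prop :=
  forall i, in_Istar i -> exists j, in_Istar j /\ (i < j)%O.

Definition fixed (f : {poly K}) : Prop :=
  exists i0, forall i, (i0 <= i)%O -> vval v f.[a i] = vval v f.[a i0].

Definition transcendental_type : Prop := forall f : {poly K}, fixed f.
Definition algebraic_type : Prop := exists f : {poly K}, ~ fixed f.

Definition minimal_unfixed (F : {poly K}) : Prop :=
  F \is monic /\ ~ fixed F /\
  forall h : {poly K}, h \is monic -> ~ fixed h -> (size F <= size h)%N.

(* Elements of the divisible hull Gamma_Q are represented as formal
   quotients alpha/n with alpha in G, n > 0.  qle alpha n x means
   alpha/n <= x for x in Gamma \cup {infinity}. *)
Definition qle (alpha : G) (n : nat) (x : option G) : bool :=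
  match x with None => true | Some b => ole O alpha (b *+ n) end.

(* D = { alpha in Gamma_Q | alpha <= nu_i(F) for some i in I^* };
   gamma_a <> infinity  iff  D <> Gamma_Q, i.e. some element of Gamma_Q
   is not in D. *)
Definition D_ne_GammaQ (F : {poly K}) : Prop :=
  exists (alpha : G) (n : nat), (0 < n)%N /\
    forall (i j : I) (gam : G), in_Istar i -> is_succ i j ->
      vval v (a j - a i) = Some gam -> ~ qle alpha n (nu (a i) gam F).

Definition gamma_finite : Prop :=
  exists F : {poly K}, minimal_unfixed F /\ D_ne_GammaQ F.

End PCS.

(* For i in I^* let gamma_i be the common value of v(a_j - a_i), j > i; it is
   strictly increasing.  Two of the values v(b_k) + k gamma, k <> l, coincide for
   at most one gamma, so along the sequence any finitely many of them are
   eventually pairwise distinct, and the valuation of a sum of the b_k d^k with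
   v(d) = gamma_i is then their minimum.
   If I has a maximum M, expand g around a_M: v(a_i - a_M) = gamma_i, so v(g(a_i))
   is the Gauss value v_{a_M,gamma_i}(g), which equals nu_i(g) since a_i is within
   gamma_i of a_M.
   Otherwise expand around a_i: g(a_j) - g(a_i) = sum_{k>=1} g^[k](a_i)(a_j - a_i)^k
   with Hasse derivatives g^[k] of degree < deg g; these are fixed, with eventual
   values beta_k = v(g^[k](a_i)), so
   v(g(a_j) - g(a_i)) = m_i := min_{k>=1} (beta_k + k gamma_i), strictly increasing,
   and nu_i(g) = min(v(g(a_i)), m_i).  An ultrametric argument on the increments
   gives v(g(a_i)) <= m_i for large i. *)

From Pilot Require Import Defs.
From HB Require Import structures.
From mathcomp Require Import all_boot all_order all_algebra.
From mathcomp Require Import zify.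
From Stdlib Require Import Classical ClassicalEpsilon.
Import Order.TTheory GRing.Theory.
Local Open Scope ring_scope.
Set Implicit Arguments. Unset Strict Implicit. Unset Printing Implicit Defensive.

Section OrderedGroup.
Variables (G : zmodType) (O : oag G).
Local Notation gle := (ole O).
Local Notation leo := (leE O).
Local Notation lto := (ltE O).

Definition glt (x y : G) := gle x y && ~~ gle y x.

Lemma leo_refl x : leo x x. Proof. by case: x => //= x; apply: ole_refl. Qed.

Lemma leo_trans x y z : leo x y -> leo y z -> leo x z.
Proof. by case: x; case: y; case: z => //= ???; apply: ole_trans. Qed.

Lemma leo_anti x y : leo x y -> leo y x -> x = y.
Proof. by case: x; case: y => //= ?? H1 H2; rewrite (ole_anti H1 H2). Qed.

Lemma leo_total x y : leo x y || leo y x.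
Proof. by case: x; case: y => //= ??; apply: ole_total. Qed.

Lemma leo_none x : leo x None. Proof. by case: x. Qed.

Lemma ltoNleo x y : lto x y = ~~ leo y x.
Proof.
rewrite /ltE andbC; case: (boolP (leo y x)) => //= /negPf.
by case/orP: (leo_total x y) => ->.
Qed.

Lemma lto_leo x y : lto x y -> leo x y. Proof. by case/andP. Qed.

Lemma lto_leo_trans x y z : lto x y -> leo y z -> lto x z.
Proof. by rewrite !ltoNleo => /negP yx le_yz; apply/negP => /(leo_trans le_yz). Qed.

Lemma leo_lto_trans x y z : leo x y -> lto y z -> lto x z.
Proof. by rewrite !ltoNleo => le_xy /negP zy; apply/negP => /leo_trans/(_ le_xy). Qed.

Lemma lto_trans x y z : lto x y -> lto y z -> lto x z.
Proof. by move=> H /lto_leo; apply: lto_leo_trans. Qed.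

Lemma lto_neq_none x y : lto x y -> x <> None. Proof. by case: x; case: y. Qed.

Lemma minE_l x y : leo x y -> minE O x y = x. Proof. by rewrite /minE => ->. Qed.

Lemma minE_r x y : leo y x -> minE O x y = y.
Proof. by rewrite /minE; case: ifP => // H1 H2; apply: leo_anti. Qed.

Lemma minNE y : minE O None y = y. Proof. by case: y. Qed.

Lemma leo_minE m x y : leo m (minE O x y) = leo m x && leo m y.
Proof.
case/orP: (leo_total x y) => H; [rewrite minE_l // | rewrite minE_r // andbC];
  by apply/idP/andP => [le_m|[]//]; split=> //; apply: leo_trans le_m H.
Qed.

Lemma glt_trans x y z : glt x y -> glt y z -> glt x z.
Proof. exact: (@lto_trans (Some x) (Some y) (Some z)). Qed.

Lemma lto_minE m x y : lto m x -> lto m y -> lto m (minE O x y).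
Proof. by rewrite /minE; case: ifP. Qed.

Lemma gleD2r x y z : gle (x + z) (y + z) = gle x y.
Proof. by apply/idP/idP => [/(ole_add (- z))|/ole_add //]; rewrite !addrK. Qed.

Lemma gltD2r x y z : glt (x + z) (y + z) = glt x y.
Proof. by rewrite /glt !gleD2r. Qed.

Lemma gltD2l x y z : glt (z + x) (z + y) = glt x y.
Proof. by rewrite ![z + _]addrC gltD2r. Qed.

Lemma gltr_sub0 x y : glt 0 (y - x) = glt x y.
Proof. by rewrite -(gltD2r _ _ x) add0r subrK. Qed.

Lemma gleD x y z w : gle x y -> gle z w -> gle (x + z) (y + w).
Proof.
move=> le_xy le_zw; apply: ole_trans (_ : gle (y + z) _); first by rewrite gleD2r.
by rewrite ![y + _]addrC gleD2r.
Qed.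

Lemma gle_mulrn x y n : gle x y -> gle (x *+ n) (y *+ n).
Proof.
move=> le_xy; elim: n => [|n IH]; first by rewrite !mulr0n ole_refl.
by rewrite !mulrS gleD.
Qed.

Lemma leo_addE2 a b c e : leo a b -> leo c e -> leo (addE a c) (addE b e).
Proof. by case: a; case: b; case: c; case: e => //= *; apply: gleD. Qed.

Lemma addE_SomeA m (y z : G) : addE (addE m (Some y)) (Some z) = addE m (Some (y + z)).
Proof. by case: m => //= m; rewrite addrA. Qed.

Lemma gtr0_mulrn x n : glt 0 x -> (0 < n)%N -> glt 0 (x *+ n).
Proof.
move=> x_gt0; case: n => // n _; elim: n => [|n IH]; first by rewrite mulr1n.
have lt_n_Sn : glt (x *+ n.+1) (x *+ n.+2).
  by rewrite [x *+ n.+2]mulrS -{1}[x *+ n.+1]add0r gltD2r.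
exact: glt_trans IH lt_n_Sn.
Qed.

Lemma gltr_mulrn x y n : glt x y -> (0 < n)%N -> glt (x *+ n) (y *+ n).
Proof.
by move=> lt_xy n_gt0; rewrite -gltr_sub0 -mulrnBl gtr0_mulrn // gltr_sub0.
Qed.

Lemma gmulrn_eq0 (x : G) n : (0 < n)%N -> x *+ n = 0 -> x = 0.
Proof.
move=> n_gt0 x_n0.
have pos_mulrn y : glt 0 y -> y *+ n != 0.
  by move/gtr0_mulrn/(_ n_gt0); apply: contraTneq => ->; rewrite /glt ole_refl.
case/orP: (ole_total O 0 x) => [x_ge0|x_le0].
  case: (boolP (gle x 0)) => [x_le0|x_nle0]; first exact: ole_anti x_le0 x_ge0.
  have x_gt0 : glt 0 x by rewrite /glt x_ge0 x_nle0.
  by have /eqP := pos_mulrn x x_gt0.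
case: (boolP (gle 0 x)) => [x_ge0|x_nge0]; first exact: ole_anti x_le0 x_ge0.
have Nx_gt0 : glt 0 (- x) by rewrite -[- x]sub0r gltr_sub0 /glt x_le0 x_nge0.
by have /eqP[] := pos_mulrn (- x) Nx_gt0; rewrite mulNrn x_n0 oppr0.
Qed.

Lemma gmulrn_inj (d : G) k l : glt 0 d -> d *+ k = d *+ l -> k = l.
Proof.
move=> d_gt0; wlog lt_kl : k l / (k < l)%N => [W|].
  case: (ltngtP k l) => [/W //|lt_lk E|-> //].
  exact/esym/(W _ _ lt_lk)/esym.
have lk_gt0 : (0 < l - k)%N by rewrite subn_gt0.
rewrite -(subnKC (ltnW lt_kl)) mulrnDr -{1}[d *+ k]addr0 => /addrI/esym.
by move/(gmulrn_eq0 lk_gt0) => d0; move: d_gt0; rewrite d0 /glt ole_refl.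
Qed.

Definition wval (b : option G) (x : G) (k : nat) := addE b (Some (x *+ k)).

Lemma wval0 b x : wval b x 0 = b.
Proof. by case: b => //= b; rewrite mulr0n addr0. Qed.

Lemma wval_lt b x y k : b <> None -> glt x y -> (0 < k)%N ->
  lto (wval b x k) (wval b y k).
Proof.
by case: b => // b _ lt_xy k_gt0; rewrite /= /ltE /= -/(glt _ _) gltD2l gltr_mulrn.
Qed.

(* Two lines of distinct slopes k, l meet at most once. *)
Lemma wval_eq_uniq bk bl x y k l : glt x y ->
  wval (Some bk) x k = wval (Some bl) x l ->
  wval (Some bk) y k = wval (Some bl) y l -> k = l.
Proof.
move=> lt_xy [Ex] [Ey]; apply: (@gmulrn_inj (y - x)); first by rewrite gltr_sub0.
rewrite !mulrnBl.
have -> : y *+ k = bl + y *+ l - bk by rewrite -Ey [bk + _]addrC addrK.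
have -> : x *+ k = bl + x *+ l - bk by rewrite -Ex [bk + _]addrC addrK.
by rewrite opprB addrA subrK opprD addrACA subrr add0r.
Qed.

Lemma leo_wvalE m b x k : leo m (wval b x k) = leo (addE m (Some (- (x *+ k)))) b.
Proof.
by case: m; case: b => //= b m; rewrite -(gleD2r (m - x *+ k) b (x *+ k)) subrK.
Qed.

Definition fmin (s : seq (option G)) := foldr (minE O) None s.

Lemma leo_fmin m s : leo m (fmin s) = all (leo m) s.
Proof. by elim: s => [|x s IH] /=; rewrite ?leo_none // leo_minE IH. Qed.

Lemma fmin_le s x : x \in s -> leo (fmin s) x.
Proof. by move=> xs; have := leo_refl (fmin s); rewrite leo_fmin => /allP; apply. Qed.

Lemma fmin_mem s : fmin s = None \/ fmin s \in s.
Proof.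
elim: s => [|x s IH] /=; first by left.
case/orP: (leo_total x (fmin s)) => H; first by rewrite minE_l // mem_head; right.
by rewrite minE_r //; case: IH => [|IH]; [left | right; rewrite inE IH orbT].
Qed.

Lemma fmin_lt (T : eqType) (s : seq T) (x y : T -> option G) :
  (forall k, k \in s -> (x k = None /\ y k = None) \/ lto (x k) (y k)) ->
  fmin (map x s) <> None -> lto (fmin (map x s)) (fmin (map y s)).
Proof.
move=> lt_xy xs_fin; case: (fmin_mem (map y s)) => [->|/mapP [k ks ->]].
  by case: (fmin _) xs_fin.
case: (lt_xy k ks) => [[xk yk]|lt_k]; last first.
  by apply: leo_lto_trans lt_k; apply/fmin_le/map_f.
have : leo (fmin (map x s)) (x k) by apply/fmin_le/map_f.
by rewrite xk yk; case: (fmin _) xs_fin.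
Qed.

Definition separated (s : seq nat) (w : nat -> option G) :=
  forall k l, k \in s -> l \in s -> k != l -> w k = w l -> w k = None.

End OrderedGroup.

Section Valuation.
Variables (K : fieldType) (G : zmodType) (O : oag G) (v : valuation K G O).
Local Notation leo := (leE O).
Local Notation lto := (ltE O).
Local Notation V := (vval v).

Lemma vval0 : V 0 = None. Proof. exact/val_inf. Qed.

Lemma vval_eq0 x : (V x == None) = (x == 0).
Proof. by apply/eqP/eqP => /(val_inf v). Qed.

Lemma vval1 : V 1 = Some 0.
Proof.
case E: (V 1) => [e|]; last by move/eqP: E; rewrite vval_eq0 oner_eq0.
have := Defs.valM v 1 1; rewrite mulr1 E => -[].
by rewrite -{1}[e]addr0 => /addrI ->.
Qed.

Lemma vvalN x : V (- x) = V x.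
Proof.
have VN1 : V (-1) = Some 0.
  case E: (V (-1)) => [e|]; last by move/eqP: E; rewrite vval_eq0 oppr_eq0 oner_eq0.
  have := Defs.valM v (-1) (-1); rewrite mulrNN mulr1 vval1 E => -[/esym e2].
  by congr Some; apply: (@gmulrn_eq0 _ O e 2); rewrite // mulr2n.
by rewrite -mulN1r Defs.valM VN1; case: (V x) => //= g; rewrite add0r.
Qed.

Lemma vvalBC x y : V (x - y) = V (y - x).
Proof. by rewrite -opprB vvalN. Qed.

Lemma vvalD_ge m x y : leo m (V x) -> leo m (V y) -> leo m (V (x + y)).
Proof.
by move=> le_mx le_my; apply: leo_trans (Defs.valD v x y); rewrite leo_minE le_mx.
Qed.

Lemma vvalD_lt x y : lto (V x) (V y) -> V (x + y) = V x.
Proof.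
move=> lt_xy; apply: leo_anti; last first.
  by apply: vvalD_ge; [apply: leo_refl | apply: lto_leo].
rewrite -[leo _ _]negbK -ltoNleo; apply/negP => lt_x_xy.
have := lto_minE lt_x_xy lt_xy; rewrite ltoNleo -(vvalN y).
by have := Defs.valD v (x + y) (- y); rewrite addrK => ->.
Qed.

Lemma vvalD_neq x y : V x <> V y -> V (x + y) = minE O (V x) (V y).
Proof.
move=> neq_xy; case/orP: (leo_total O (V x) (V y)) => le_xy.
  have lt_xy : lto (V x) (V y).
    by rewrite ltoNleo; apply: contra_notN neq_xy; apply: leo_anti.
  by rewrite vvalD_lt // minE_l.
have lt_yx : lto (V y) (V x).
  by rewrite ltoNleo; apply: contra_notN neq_xy => /leo_anti; apply.
by rewrite addrC vvalD_lt // minE_r.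
Qed.

Lemma vvalMn_ge m x n : leo m (V x) -> leo m (V (x *+ n)).
Proof.
move=> le_mx; elim: n => [|n IH]; first by rewrite mulr0n vval0 leo_none.
by rewrite mulrS; apply: vvalD_ge.
Qed.

Lemma vvalX x g k : V x = Some g -> V (x ^+ k) = Some (g *+ k).
Proof.
move=> Vx; elim: k => [|k IH]; first by rewrite expr0 vval1 mulr0n.
by rewrite exprS Defs.valM Vx IH /= mulrS.
Qed.

Lemma vvalX_ge g x k : leo (Some g) (V x) -> leo (Some (g *+ k)) (V (x ^+ k)).
Proof.
case: (eqVneq x 0) => [->|/negbTE x_neq0].
  by case: k => [|k]; rewrite ?expr0 ?vval1 ?mulr0n ?leo_refl // expr0n vval0 leo_none.
case E: (V x) => [h|]; last by move/eqP: E; rewrite vval_eq0 x_neq0.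
by rewrite (vvalX k E); apply: gle_mulrn.
Qed.

Lemma vval_sum_ge (T : eqType) m (s : seq T) (F : T -> K) :
  (forall i, i \in s -> leo m (V (F i))) -> leo m (V (\sum_(i <- s) F i)).
Proof.
elim: s => [|i s IH] le_mF; first by rewrite big_nil vval0 leo_none.
rewrite big_cons; apply: vvalD_ge; first by apply: le_mF; rewrite mem_head.
by apply: IH => j js; apply: le_mF; rewrite inE js orbT.
Qed.

Lemma vval_sum_separated (s : seq nat) (F : nat -> K) :
  uniq s -> separated s (fun k => V (F k)) ->
  V (\sum_(k <- s) F k) = fmin O [seq V (F k) | k <- s].
Proof.
elim: s => [|k s IH] /=; first by rewrite big_nil vval0.
move=> /andP[ks us] sep; rewrite big_cons; set R := \sum_(i <- s) F i.
have VR : V R = fmin O [seq V (F i) | i <- s].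
  by apply: IH => // i j i_s j_s; apply: sep; rewrite inE ?i_s ?j_s orbT.
rewrite -VR; case: (eqVneq (V (F k)) (V R)) => [eq_kR|/eqP]; last exact: vvalD_neq.
suff Fk0 : V (F k) = None.
  by rewrite Fk0 minNE; move/eqP: Fk0; rewrite vval_eq0 => /eqP ->; rewrite add0r.
case: (fmin_mem O [seq V (F i) | i <- s]) => [|/mapP [l ls El]].
  by rewrite -VR -eq_kR.
apply: (sep k l); rewrite ?mem_head ?inE ?ls ?orbT ?eq_kR ?VR //.
by apply: contraNneq ks => ->.
Qed.

Lemma vval_expansion (s : seq nat) (c : nat -> K) (beta : nat -> option G) d x :
  uniq s -> V d = Some x -> {in s, forall k, V (c k) = beta k} ->
  separated s (fun k => wval (beta k) x k) ->
  V (\sum_(k <- s) c k * d ^+ k) = fmin O [seq wval (beta k) x k | k <- s].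
Proof.
move=> us Vd Vc sep.
have Vterm : {in s, forall k, V (c k * d ^+ k) = wval (beta k) x k}.
  by move=> k ks; rewrite Defs.valM Vc // (vvalX k Vd).
rewrite vval_sum_separated //; first by congr (fmin O _); apply/eq_in_map.
by move=> k l ks ls; rewrite !Vterm //; apply: sep.
Qed.
End Valuation.

Section TaylorShift.
Variable K : fieldType.

Lemma nderivn_map_polyC (p : {poly K}) k : (p^:P)^`N(k) = (p^`N(k))^:P.
Proof. by apply/polyP => i; rewrite coef_nderivn !coef_map /= coef_nderivn polyCMn. Qed.

Lemma coef_comp_XaddC (p : {poly K}) c k : (p \Po ('X + c%:P))`_k = (p^`N(k)).[c].
Proof.
have -> : p \Po ('X + c%:P) = \poly_(i < size p) (p^`N(i)).[c].
  rewrite /comp_poly addrC nderiv_taylor; last exact: mulrC.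
  rewrite size_map_polyC poly_def; apply: eq_bigr => i _.
  by rewrite nderivn_map_polyC horner_map /= mul_polyC.
by rewrite coef_poly; case: ltnP => // le_p_k; rewrite nderivn_poly0 // horner0.
Qed.

Lemma size_comp_XaddC (p : {poly K}) c : size (p \Po ('X + c%:P)) = size p.
Proof. by rewrite size_comp_poly2 // size_XaddC. Qed.

Lemma comp_XaddC_comp (p : {poly K}) c e :
  (p \Po ('X + c%:P)) \Po ('X + e%:P) = p \Po ('X + (c + e)%:P).
Proof. by rewrite -comp_polyA comp_polyD comp_polyX comp_polyC addrAC -addrA -polyCD. Qed.

Lemma horner_sub_taylor (p : {poly K}) x y :
  p.[y] - p.[x] = \sum_(k <- iota 1 (size p).-1) (p^`N(k)).[x] * (y - x) ^+ k.
Proof.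
have [/eqP|p_gt0] := posnP (size p).
  by rewrite size_poly_eq0 => /eqP ->; rewrite !horner0 subrr size_poly0 big_nil.
rewrite -[y](subrK x) addrK [_ + x]addrC nderiv_taylor; last exact: mulrC.
rewrite -(big_mkord xpredT (fun k => (p^`N(k)).[x] * (y - x) ^+ k)) /index_iota subn0.
by rewrite -{1}(prednK p_gt0) big_cons nderivn0 expr0 mulr1 [p.[x] + _]addrC addrK.
Qed.
End TaylorShift.

Section GaussValuation.
Variables (K : fieldType) (G : zmodType) (O : oag G) (v : valuation K G O).
Local Notation leo := (leE O).
Local Notation V := (vval v).

Definition gauss_val (x : G) (p : {poly K}) :=
  fmin O [seq wval (V p`_k) x k | k <- iota 0 (size p)].

Lemma nuE c x f : nu v c x f = gauss_val x (f \Po ('X + c%:P)).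
Proof. by rewrite /gauss_val size_comp_XaddC. Qed.

Lemma gauss_val_le x p k : leo (gauss_val x p) (wval (V p`_k) x k).
Proof.
case: (ltnP k (size p)) => [lt_kp|le_pk]; first by apply/fmin_le/map_f; rewrite mem_iota.
by rewrite nth_default // vval0 leo_none.
Qed.

Lemma gauss_val_comp_XaddC_ge x d p : leo (Some x) (V d) ->
  leo (gauss_val x p) (gauss_val x (p \Po ('X + d%:P))).
Proof.
move=> le_xd; rewrite {2}/gauss_val leo_fmin; apply/allP => _ /mapP [k _ ->].
rewrite coef_comp_XaddC horner_coef leo_wvalE; apply: vval_sum_ge => i _.
rewrite coef_nderivn Defs.valM.
apply: leo_trans _ (leo_addE2 (vvalMn_ge 'C(k + i, k) (leo_refl O _)) (vvalX_ge i le_xd)).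
rewrite -/(wval _ x i) leo_wvalE addE_SomeA -opprD -mulrnDr -leo_wvalE.
exact: gauss_val_le.
Qed.

Lemma gauss_val_comp_XaddC x d p : V d = Some x ->
  gauss_val x (p \Po ('X + d%:P)) = gauss_val x p.
Proof.
move=> Vd; apply: leo_anti; last by apply: gauss_val_comp_XaddC_ge; rewrite Vd leo_refl.
set q := p \Po _; have -> : p = q \Po ('X + (- d)%:P).
  by rewrite /q comp_XaddC_comp subrr addr0 comp_polyXr.
by apply: gauss_val_comp_XaddC_ge; rewrite vvalN Vd leo_refl.
Qed.

Lemma nu_recenter c c' x f : V (c' - c) = Some x -> nu v c' x f = nu v c x f.
Proof.
move=> Vcc; have -> : c' = c + (c' - c) by rewrite addrC subrK.
by rewrite !nuE -comp_XaddC_comp gauss_val_comp_XaddC.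
Qed.

Lemma vval_horner_gauss x d (p : {poly K}) : V d = Some x ->
  separated (iota 0 (size p)) (fun k => wval (V p`_k) x k) -> V p.[d] = gauss_val x p.
Proof.
move=> Vd sep; rewrite horner_coef -(big_mkord xpredT (fun k => p`_k * d ^+ k)).
by rewrite /index_iota subn0; apply: vval_expansion => //; apply: iota_uniq.
Qed.

Lemma nu_split c x f : nu v c x f =
  minE O (V f.[c]) (fmin O [seq wval (V (f^`N(k)).[c]) x k | k <- iota 1 (size f).-1]).
Proof.
rewrite nuE /gauss_val size_comp_XaddC.
have [/eqP|f_gt0] := posnP (size f).
  by rewrite size_poly_eq0 => /eqP ->; rewrite horner0 vval0 size_poly0.
rewrite -{1}(prednK f_gt0) /= coef_comp_XaddC nderivn0 wval0.
by congr (minE O _ (fmin O _)); apply: eq_map => k; rewrite coef_comp_XaddC.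
Qed.
End GaussValuation.

Section Ultimately.
Variables (d : Order.disp_t) (I : orderType d).

Definition ultimately (P : I -> Prop) :=
  exists i0, in_Istar i0 /\ forall i, in_Istar i -> (i0 <= i)%O -> P i.

Lemma ultimately_ge i : in_Istar i -> ultimately (fun j => (i <= j)%O).
Proof. by move=> Ii; exists i. Qed.

Lemma ultimately_mono (P Q : I -> Prop) :
  ultimately P -> (forall i, in_Istar i -> P i -> Q i) -> ultimately Q.
Proof.
by move=> [i0 [Ii0 P_i0]] PQ; exists i0; split=> // i Ii le_i0i; apply/PQ/P_i0.
Qed.

Lemma ultimately_and (P Q : I -> Prop) :
  ultimately P -> ultimately Q -> ultimately (fun i => P i /\ Q i).
Proof.
move=> [i0 [Ii0 P_i0]] [i1 [Ii1 Q_i1]].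
have [le_01|le_10] := leP i0 i1; [exists i1 | exists i0]; split=> // i Ii le_i.
  by split; [apply: P_i0 (le_trans le_01 le_i) | apply: Q_i1].
by split; [apply: P_i0 | apply: Q_i1 (le_trans (ltW le_10) le_i)].
Qed.

Lemma ultimately_all (T : eqType) (s : seq T) (P : T -> I -> Prop) :
  (exists i : I, in_Istar i) -> (forall x, x \in s -> ultimately (P x)) ->
  ultimately (fun i => forall x, x \in s -> P x i).
Proof.
move=> [i0 Ii0]; elim: s => [|x s IH] Ps; first by exists i0.
have Ps' y : y \in s -> ultimately (P y) by move=> ys; apply: Ps; rewrite inE ys orbT.
apply: (ultimately_mono (ultimately_and (Ps x (mem_head _ _)) (IH Ps'))).
move=> i _ [Pxi Psi] y.
by rewrite inE => /predU1P [->|]; [apply: Pxi | apply: Psi].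
Qed.
End Ultimately.

Section PseudoCauchy.
Variables (K : fieldType) (G : zmodType) (O : oag G) (v : valuation K G O).
Variables (d : Order.disp_t) (I : orderType d) (a : I -> K).
Local Notation leo := (leE O).
Local Notation lto := (ltE O).
Local Notation V := (vval v).

Lemma ultimately_vval_le_gap (y : I -> K) (m : I -> option G) L :
  (forall i : I, in_Istar i) ->
  (forall i j, (L <= i)%O -> (i < j)%O -> V (y j - y i) = m i) ->
  (forall i j, (L <= i)%O -> (i < j)%O -> m i <> None -> lto (m i) (m j)) ->
  ultimately (fun i => leo (V (y i)) (m i)).
Proof.
move=> allI val_incr m_lt.
case: (classic (exists i, (L <= i)%O /\ lto (m i) (V (y i)))) => [[i [le_Li lt_i]]|none].
  have [j lt_ij] := allI i; have le_Lj := le_trans le_Li (ltW lt_ij).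
  have Vyj : V (y j) = m i by rewrite -[y j](subrK (y i)) vvalD_lt val_incr.
  exists j; split=> // k _ le_jk; have lt_ik := lt_le_trans lt_ij le_jk.
  suff -> : V (y k) = m i by apply/lto_leo/m_lt => //; apply: lto_neq_none lt_i.
  have [<- //|ne_jk] := eqVneq j k; have lt_jk : (j < k)%O by rewrite lt_neqAle ne_jk.
  rewrite -[y k](subrK (y j)) addrC vvalD_lt Vyj // -Vyj val_incr // Vyj m_lt //.
  exact: lto_neq_none lt_i.
exists L; split=> // i _ le_Li; rewrite -[leo _ _]negbK -ltoNleo.
by apply/negP => lt_i; apply: none; exists i.
Qed.

Hypothesis pc :
  forall i j k, (i < j)%O -> (j < k)%O -> lto (V (a i - a j)) (V (a j - a k)).

Lemma pc_gap_const i j j' : (i < j)%O -> (i < j')%O -> V (a j - a i) = V (a j' - a i).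
Proof.
wlog le_jj' : j j' / (j <= j')%O => [W lt_ij lt_ij'|].
  by have [/W|/ltW/W] := leP j j'; [apply | move=> W'; apply/esym/W'].
move: le_jj'; rewrite le_eqVlt => /predU1P[-> //|lt_jj'] lt_ij _.
have := pc lt_ij lt_jj'; rewrite vvalBC [V (a j - a j')]vvalBC => lt_V.
by rewrite -(vvalD_lt lt_V) [_ + (a j' - _)]addrC addrA subrK.
Qed.

Hypothesis nomax : Istar_nomax I.

Lemma pc_gap_exists i : in_Istar i ->
  exists x, forall j, (i < j)%O -> V (a j - a i) = Some x.
Proof.
move=> Ii; have [j [[k lt_jk] lt_ij]] := nomax Ii.
have := pc lt_ij lt_jk; rewrite vvalBC.
case E: (V (a j - a i)) => [x|]; last by move/lto_neq_none.
by move=> _; exists x => j' lt_ij'; rewrite (pc_gap_const lt_ij' lt_ij) E.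
Qed.

Variable gap : I -> G.
Hypothesis gapP : forall i j, in_Istar i -> (i < j)%O -> V (a j - a i) = Some (gap i).

Lemma gap_lt i j : in_Istar j -> (i < j)%O -> glt O (gap i) (gap j).
Proof.
move=> [k lt_jk] lt_ij; have := pc lt_ij lt_jk.
have [Ii Ij] : in_Istar i /\ in_Istar j by split; [exists j | exists k].
by rewrite vvalBC (gapP Ii lt_ij) vvalBC (gapP Ij lt_jk).
Qed.

Hypothesis Istar_ne : exists i : I, in_Istar i.

Lemma ultimately_wval_neq (beta : nat -> option G) k l :
  ultimately (fun i => k != l ->
    wval (beta k) (gap i) k = wval (beta l) (gap i) l -> wval (beta k) (gap i) k = None).
Proof.
have [i0 Ii0] := Istar_ne.
case: (classic (exists i, in_Istar i /\ k != l /\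
  wval (beta k) (gap i) k = wval (beta l) (gap i) l /\ wval (beta k) (gap i) k <> None))
  => [[i [Ii [_ [eq_i fin_i]]]]|none]; last first.
  by exists i0; split=> // i Ii _ ne_kl eq_i; apply: NNPP => fin_i; apply: none; exists i.
have [j [Ij lt_ij]] := nomax Ii; exists j; split=> // i' Ii' le_ji' /eqP ne_kl.
move: eq_i fin_i; case: (beta k) => [bk|] //; case: (beta l) => [bl|] // eq_i _ eq_i'.
by case: ne_kl; apply: wval_eq_uniq (gap_lt Ii' (lt_le_trans lt_ij le_ji')) eq_i eq_i'.
Qed.

Lemma ultimately_separated (beta : nat -> option G) (s : seq nat) :
  ultimately (fun i => separated s (fun k => wval (beta k) (gap i) k)).
Proof.
have sep_k k : ultimately (fun i => forall l, l \in s -> k != l ->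
    wval (beta k) (gap i) k = wval (beta l) (gap i) l -> wval (beta k) (gap i) k = None).
  by apply: ultimately_all => // l _; apply: ultimately_wval_neq.
apply: (ultimately_mono (ultimately_all Istar_ne (fun k (_ : k \in s) => sep_k k))).
by move=> i _ sep_i k l ks ls; apply: sep_i.
Qed.

Lemma ultimately_nu_of_max (g : {poly K}) (M : I) : (forall i, (i <= M)%O) ->
  ultimately (fun i => V g.[a i] = nu v (a i) (gap i) g).
Proof.
move=> maxM; set C := g \Po ('X + (a M)%:P).
apply: (ultimately_mono (ultimately_separated (fun k => V C`_k) (iota 0 (size C)))).
move=> i [j lt_ij] sep; have lt_iM := lt_le_trans lt_ij (maxM j).
have VaiM : V (a i - a M) = Some (gap i) by rewrite vvalBC; apply: gapP => //; exists j.
have -> : g.[a i] = C.[a i - a M] by rewrite horner_comp hornerD hornerX hornerC subrK.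
by rewrite (nu_recenter g VaiM) nuE -/C; apply: vval_horner_gauss.
Qed.

Lemma ultimately_nu_of_fixed (g : {poly K}) : (forall i : I, in_Istar i) ->
  (forall f : {poly K}, (size f < size g)%N -> fixed v a f) ->
  ultimately (fun i => V g.[a i] = nu v (a i) (gap i) g).
Proof.
move=> allI fixed_lt; set s := iota 1 (size g).-1.
have [L [_ stable]] : ultimately (fun i => forall k, k \in s ->
    forall j, (i <= j)%O -> V (g^`N(k)).[a j] = V (g^`N(k)).[a i]).
  apply: ultimately_all => // k; rewrite mem_iota add1n => /andP[k_gt0 lt_kg].
  have [|i0 fix_k] := fixed_lt (g^`N(k)).
    by apply: leq_ltn_trans (size_poly _ _) _; lia.
  by exists i0; split=> // i _ le_i0i j le_ij; rewrite !fix_k // (le_trans le_i0i le_ij).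
pose beta k := V (g^`N(k)).[a L].
have beta_eq i : (L <= i)%O -> {in s, forall k, V (g^`N(k)).[a i] = beta k}.
  by move=> le_Li k ks; apply: stable.
pose m i := fmin O [seq wval (beta k) (gap i) k | k <- s].
have [L' [_ sep]] :=
  ultimately_and (ultimately_ge (allI L)) (ultimately_separated beta s).
have step i j : (L' <= i)%O -> (i < j)%O -> V (g.[a j] - g.[a i]) = m i.
  move=> le_L'i lt_ij; have [le_Li sep_i] := sep i (allI i) le_L'i.
  rewrite horner_sub_taylor /m; apply: vval_expansion => //.
  - exact: iota_uniq.
  - exact: gapP (allI i) lt_ij.
  - exact: beta_eq.
have m_lt i j : (L' <= i)%O -> (i < j)%O -> m i <> None -> lto (m i) (m j).
  move=> _ lt_ij; apply: fmin_lt => k; rewrite mem_iota => /andP[k_gt0 _].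
  by case: (beta k) => [b|]; [right; apply: wval_lt; rewrite ?gap_lt | left].
apply: (ultimately_mono (ultimately_and (ultimately_ge (allI L'))
  (ultimately_vval_le_gap allI step m_lt))) => i _ [le_L'i le_gm].
have [le_Li _] := sep i (allI i) le_L'i.
rewrite nu_split -/s (_ : fmin O _ = m i) ?minE_l //.
by congr (fmin O _); apply/eq_in_map => k ks; rewrite (beta_eq i).
Qed.
End PseudoCauchy.

Unset Implicit Arguments.

Theorem lemma5p7 (K : fieldType) (G : zmodType) (O : oag G)
  (v : valuation K G O) (d : Order.disp_t) (I : orderType d) (a : I -> K)
  (g : {poly K}) :
  pseudo_cauchy v a ->
  Istar_nomax I ->
  (transcendental_type v a \/ (algebraic_type v a /\ gamma_finite v a)) ->
  (forall f : {poly K}, (size f < size g)%N -> fixed v a f) ->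
  exists i0 : I, in_Istar i0 /\
    forall (i j : I) (gam : G), in_Istar i -> (i0 <= i)%O -> is_succ i j ->
      vval v (a j - a i) = Some gam ->
      vval v g.[a i] = nu v (a i) gam g.
Proof.
move=> [_ [[i1 [j1 ne_ij]] pc]] nomax _ fixed_lt.
have Istar_ne : exists i : I, in_Istar i.
  by case: (ltgtP i1 j1) ne_ij => // [lt_ij|lt_ji] _; [exists i1, j1 | exists j1, i1].
have [gap gapP] : exists gap : I -> G,
    forall i j, in_Istar i -> (i < j)%O -> vval v (a j - a i) = Some (gap i).
  exists (fun i => epsilon (inhabits 0)
    (fun x => forall j, (i < j)%O -> vval v (a j - a i) = Some x)).
  by move=> i j Ii; apply: (epsilon_spec _ _ (pc_gap_exists pc nomax Ii)).
have [i0 [Ii0 nu_gap]] : ultimately (fun i => vval v g.[a i] = nu v (a i) (gap i) g).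
  case: (classic (exists M : I, forall i, (i <= M)%O)) => [[M maxM]|no_max].
    exact: (ultimately_nu_of_max pc nomax gapP Istar_ne g maxM).
  apply: (ultimately_nu_of_fixed pc nomax gapP Istar_ne _ fixed_lt) => i.
  apply: NNPP => not_Ii; apply: no_max; exists i => j.
  by rewrite leNgt; apply/negP => lt_ij; apply: not_Ii; exists j.
exists i0; split=> // i j x Ii le_i0i [lt_ij _].
by rewrite gapP // => -[<-]; apply: nu_gap.
Qed.
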